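(* Let $b,c>0$, let $x_1,x_2,\dots\in\mathbb{R}^d$ and $y_1,y_2,\dots\in\mathbb{R}$. For $t\ge1$ define \[ Q_t(u_1,\dots,u_t)=b\|u_1\|^2+c\sum_{s=1}^{t-1}\|u_{s+1}-u_s\|^2+\sum_{s=1}^t (y_s-u_s^\top x_s)^2 \] and $P_t(u_t)=\min_{u_1,\dots,u_{t-1}}Q_t(u_1,\dots,u_t)$ (with $P_1=Q_1$). Define $D_1=bI+x_1x_1^\top$, $e_1=y_1x_1$, $f_1=y_1^2$, and for $t\ge2$ \[ D_t=\big(D_{t-1}^{-1}+c^{-1}I\big)^{-1}+x_tx_t^\top,\quad e_t=\big(I+c^{-1}D_{t-1}\big)^{-1}e_{t-1}+y_tx_t,\quad f_t=f_{t-1}-e_{t-1}^\top\big(cI+D_{t-1}\big)^{-1}e_{t-1}+y_t^2 . \] Then for every $t\ge1$ the matrix $D_t\in\mathbb{R}^{d\times d}$ is positive definite and, for all $u_t\in\mathbb{R}^d$, \[ P_t(u_t)=u_t^\top D_tu_t-2u_t^\top e_t+f_t . \] *)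

From HB Require Import structures.
From mathcomp Require Import all_boot all_order all_algebra.
From mathcomp Require Import reals.
Set Implicit Arguments. Unset Strict Implicit. Unset Printing Implicit Defensive.
Import Order.TTheory GRing.Theory Num.Theory.
Local Open Scope ring_scope.

Section Defs.
Variables (R : realType) (d : nat) (b c : R)
  (x : nat -> 'cV[R]_d) (y : nat -> R).

Definition dotp (u w : 'cV[R]_d) : R := (u^T *m w) ord0 ord0.
Definition sqnorm (u : 'cV[R]_d) : R := dotp u u.

(* Q_t(u_1,...,u_t); u is a sequence indexed from 1, only u_1..u_t matter *)
Definition Q (t : nat) (u : nat -> 'cV[R]_d) : R :=
  b * sqnorm (u 1%N)
  + c * (\sum_(1 <= s < t) sqnorm (u s.+1 - u s))
  + \sum_(1 <= s < t.+1) (y s - dotp (u s) (x s)) ^+ 2.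

(* p is the minimum of Q_t(u_1,...,u_{t-1}, v) over u_1,...,u_{t-1},
   i.e. p = P_t(v) (the minimum is attained) *)
Definition is_P (t : nat) (v : 'cV[R]_d) (p : R) : Prop :=
  (exists u : nat -> 'cV[R]_d, u t = v /\ Q t u = p) /\
  (forall u : nat -> 'cV[R]_d, u t = v -> p <= Q t u).

Fixpoint Dm (t : nat) : 'M[R]_d :=
  match t with
  | 0 => 0
  | 1 => b%:M + x 1%N *m (x 1%N)^T
  | t'.+1 => invmx (invmx (Dm t') + c^-1%:M) + x t *m (x t)^T
  end.

Fixpoint em (t : nat) : 'cV[R]_d :=
  match t with
  | 0 => 0
  | 1 => y 1%N *: x 1%N
  | t'.+1 => invmx (1%:M + c^-1 *: Dm t') *m em t' + y t *: x t
  end.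

Fixpoint fm (t : nat) : R :=
  match t with
  | 0 => 0
  | 1 => y 1%N ^+ 2
  | t'.+1 => fm t' - ((em t')^T *m invmx (c%:M + Dm t') *m em t') ord0 ord0
             + y t ^+ 2
  end.

End Defs.

Definition posdef (R : realType) (d : nat) (D : 'M[R]_d) : Prop :=
  D^T = D /\ forall v : 'cV[R]_d, v != 0 -> 0 < (v^T *m D *m v) ord0 ord0.

From mathcomp Require Import all_boot all_order all_algebra.
From mathcomp Require Import reals.
From mathcomp Require Import ring.
Import Order.TTheory GRing.Theory Num.Theory.
Local Open Scope ring_scope.

(* P_{t+1}(v) = min_w (P_t(w) + c |v - w|^2) + (y_{t+1} - v^T x_{t+1})^2 is the
   dynamic-programming principle for Q.  If P_t is the quadratic form
   (D, e, f), completing the square in w with M = cI + D shows the minimum is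
   again quadratic, with the coefficients of the recursion (the Woodbury
   identity turns cI - c^2 M^-1 into (D^-1 + c^-1 I)^-1), and the last
   summand adds the rank-one term x x^T.  Positive definiteness is preserved
   by inversion and by adding positive semidefinite matrices. *)

Section InverseIdentities.
Variables (F : fieldType) (n : nat) (c : F) (D : 'M[F]_n).
Hypotheses (c_neq0 : c != 0) (D_unit : D \in unitmx)
  (cD_unit : c%:M + D \in unitmx).

Lemma invmx_eq (A B : 'M[F]_n) : A *m B = 1%:M -> invmx A = B.
Proof.
by move=> AB; have [Au _] := mulmx1_unit AB; rewrite -(mulKmx Au B) AB mulmx1.
Qed.

Lemma scalar1_addZ : 1%:M + c^-1 *: D = c^-1 *: (c%:M + D).
Proof. by rewrite scalerDr scale_scalar_mx mulVf. Qed.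

Lemma invmx_1_addZ : invmx (1%:M + c^-1 *: D) = c *: invmx (c%:M + D).
Proof.
apply: invmx_eq; rewrite scalar1_addZ -scalemxAl -scalemxAr (mulmxV cD_unit).
by rewrite scalerA mulVf // scale1r.
Qed.

Lemma woodbury_scalar :
  invmx (invmx D + c^-1%:M) = c%:M - c ^+ 2 *: invmx (c%:M + D).
Proof.
apply: invmx_eq; set E := _ *m _.
suff DE : D *m E = D by rewrite -(mulKmx D_unit E) DE (mulVmx D_unit).
rewrite /E mulmxA [D *m (_ + _)]mulmxDr (mulmxV D_unit) mul_mx_scalar.
rewrite scalar1_addZ -scalemxAl mulmxBr mul_mx_scalar -scalemxAr.
rewrite (mulmxV cD_unit) scalerBr !scalerA mulVf // scale1r expr2 mulKf //.
by rewrite scalemx1 addrC addKr.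
Qed.

End InverseIdentities.

Section Dotp.
Context {R : realType} {d : nat}.
Implicit Types (u v w : 'cV[R]_d) (A : 'M[R]_d).

Lemma dotpDl u1 u2 w : dotp (u1 + u2) w = dotp u1 w + dotp u2 w.
Proof. by rewrite /dotp linearD /= mulmxDl mxE. Qed.

Lemma dotpDr u w1 w2 : dotp u (w1 + w2) = dotp u w1 + dotp u w2.
Proof. by rewrite /dotp mulmxDr mxE. Qed.

Lemma dotpZl a u w : dotp (a *: u) w = a * dotp u w.
Proof. by rewrite /dotp linearZ /= -scalemxAl mxE. Qed.

Lemma dotpZr a u w : dotp u (a *: w) = a * dotp u w.
Proof. by rewrite /dotp -scalemxAr mxE. Qed.

Lemma dotpBl u1 u2 w : dotp (u1 - u2) w = dotp u1 w - dotp u2 w.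
Proof. by rewrite dotpDl -scaleN1r dotpZl mulN1r. Qed.

Lemma dotpBr u w1 w2 : dotp u (w1 - w2) = dotp u w1 - dotp u w2.
Proof. by rewrite dotpDr -scaleN1r dotpZr mulN1r. Qed.

Lemma dotp0r u : dotp u 0 = 0.
Proof. by rewrite /dotp mulmx0 mxE. Qed.

Lemma dotpC u w : dotp u w = dotp w u.
Proof. by rewrite /dotp -[u^T *m w]trmxK [_^T ord0 ord0]mxE trmx_mul trmxK. Qed.

Lemma dotp_mulmx u A w : dotp u (A *m w) = dotp (A^T *m u) w.
Proof. by rewrite /dotp trmx_mul trmxK mulmxA. Qed.

Lemma dotp_sym_mulmx u A w : A^T = A -> dotp u (A *m w) = dotp w (A *m u).
Proof. by move=> Asym; rewrite dotp_mulmx Asym dotpC. Qed.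

Lemma dotp_outer u a w : dotp u ((a *m a^T) *m w) = dotp u a * dotp a w.
Proof.
by rewrite /dotp !mulmxA -[_ *m a^T *m w]mulmxA [LHS]mxE big_ord1 ord1.
Qed.

Lemma quad_formE A v : (v^T *m A *m v) ord0 ord0 = dotp v (A *m v).
Proof. by rewrite /dotp mulmxA. Qed.

Lemma sqnorm_ge0 v : 0 <= sqnorm v.
Proof.
by rewrite /sqnorm /dotp mxE sumr_ge0 // => i _; rewrite mxE -expr2 sqr_ge0.
Qed.

Lemma sqnorm_gt0 v : (0 < sqnorm v) = (v != 0).
Proof.
rewrite lt_def sqnorm_ge0 andbT; congr negb; apply/eqP/eqP=> [|->]; last first.
  by rewrite /sqnorm dotp0r.
rewrite /sqnorm /dotp mxE => /psumr_eq0P v0; apply/matrixP=> i j.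
have /eqP : v^T ord0 i * v i ord0 = 0.
  by apply: v0 => // k _; rewrite mxE -expr2 sqr_ge0.
by rewrite mxE mulf_eq0 orbb (ord1 j) mxE => /eqP.
Qed.

End Dotp.

Section PositiveDefinite.
Context {R : realType} {d : nat}.
Implicit Types (A B : 'M[R]_d) (a : 'cV[R]_d).

Definition psd A : Prop :=
  A^T = A /\ forall v : 'cV[R]_d, 0 <= dotp v (A *m v).

Lemma posdefE A :
  posdef A <-> A^T = A /\ forall v : 'cV[R]_d, v != 0 -> 0 < dotp v (A *m v).
Proof. by split=> -[Asym Apos]; split=> // v /Apos; rewrite quad_formE. Qed.

Lemma posdef_psd {A} : posdef A -> psd A.
Proof.
move=> /posdefE[Asym Apos]; split=> // v.
by have [->|/Apos/ltW //] := eqVneq v 0; rewrite mulmx0 dotp0r.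
Qed.

Lemma psd_outer a : psd (a *m a^T).
Proof.
split=> [|v]; first by rewrite trmx_mul trmxK.
by rewrite dotp_outer (dotpC a) -expr2 sqr_ge0.
Qed.

Lemma posdef_scalar {r : R} : 0 < r -> posdef (r%:M : 'M[R]_d).
Proof.
move=> r_gt0; apply/posdefE; split=> [|v]; first exact: tr_scalar_mx.
by rewrite mul_scalar_mx dotpZr -sqnorm_gt0; apply: mulr_gt0.
Qed.

Lemma posdefD {A B} : posdef A -> psd B -> posdef (A + B).
Proof.
move=> /posdefE[Asym Apos] [Bsym Bnneg]; apply/posdefE.
split=> [|v /Apos]; first by rewrite linearD /= Asym Bsym.
by rewrite mulmxDl dotpDr => /ltr_wpDr; apply.
Qed.

Lemma posdef_unitmx {A} : posdef A -> A \in unitmx.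
Proof.
move=> /posdefE[Asym Apos].
rewrite -row_free_unit; apply: inj_row_free => v vA0.
apply: trmx_inj; rewrite trmx0; apply/eqP/negPn/negP => /Apos.
by rewrite -{1}Asym -trmx_mul vA0 trmx0 dotp0r ltxx.
Qed.

Lemma posdef_invmx {A} : posdef A -> posdef (invmx A).
Proof.
move=> Apd; have Au := posdef_unitmx Apd.
have [Asym Apos] := iffLR (posdefE A) Apd.
apply/posdefE; split=> [|v v0]; first by rewrite trmx_inv Asym.
have w0 : invmx A *m v != 0.
  by apply: contraNneq v0 => w0; rewrite -(mulKVmx Au v) w0 mulmx0.
by rewrite -{1}(mulKVmx Au v) dotpC; apply: Apos.
Qed.

End PositiveDefinite.

Definition is_min {T : Type} {R : numDomainType} (F : T -> R) (m : R) : Prop :=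
  (exists w, F w = m) /\ forall w, m <= F w.

Lemma eq_is_min (T : Type) (R : numDomainType) (F G : T -> R) (m : R) :
  F =1 G -> is_min F m -> is_min G m.
Proof.
by move=> FG [[w Fw] Fmin]; split=> [|w']; [exists w | ]; rewrite -FG.
Qed.

Section Quadratic.
Context {R : realType} {d : nat}.
Implicit Types (A M D : 'M[R]_d) (a e v w z : 'cV[R]_d) (f g y : R).

Definition quad A e f v : R := dotp v (A *m v) - 2 * dotp v e + f.

Lemma quad_add_outer A e f a y v :
  quad (A + a *m a^T) (e + y *: a) (f + y ^+ 2) v =
  quad A e f v + (y - dotp v a) ^+ 2.
Proof. by rewrite /quad mulmxDl !dotpDr dotp_outer dotpZr (dotpC a); ring. Qed.

Lemma quad_add_sqdist c D e f v w :
  quad D e f w + c * sqnorm (v - w) =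
  quad (c%:M + D) (e + c *: v) (f + c * sqnorm v) w.
Proof.
rewrite /quad /sqnorm !dotpBl !dotpBr mulmxDl mul_scalar_mx !dotpDr !dotpZr.
by rewrite (dotpC w v); ring.
Qed.

Lemma quad_complete_square M z g w : M^T = M -> M \in unitmx ->
  quad M z g w =
  dotp (w - invmx M *m z) (M *m (w - invmx M *m z)) +
  (g - dotp z (invmx M *m z)).
Proof.
move=> Msym Mu; set w0 := invmx M *m z.
have Mw0 : M *m w0 = z by rewrite mulKVmx.
rewrite /quad mulmxBr !dotpBl !dotpBr (dotp_sym_mulmx w0 _ w Msym) Mw0.
by rewrite (dotpC z); ring.
Qed.

Lemma quad_posdef_min M z g :
  posdef M -> is_min (quad M z g) (g - dotp z (invmx M *m z)).
Proof.
move=> Mpd; have [Msym Mnneg] := posdef_psd Mpd.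
have Mu := posdef_unitmx Mpd.
split=> [|w]; last by rewrite quad_complete_square // lerDr.
exists (invmx M *m z).
by rewrite quad_complete_square // subrr mulmx0 dotp0r add0r.
Qed.

End Quadratic.

Section InfConvolution.
Context {R : realType} {d : nat}.
Variables (c : R) (D : 'M[R]_d) (e : 'cV[R]_d) (f : R).
Hypotheses (c_gt0 : 0 < c) (Dpd : posdef D).

Lemma quad_inf_sqdist v :
  is_min (fun w => quad D e f w + c * sqnorm (v - w))
    (quad (invmx (invmx D + c^-1%:M)) (invmx (1%:M + c^-1 *: D) *m e)
       (f - dotp e (invmx (c%:M + D) *m e)) v).
Proof.
have Mpd : posdef (c%:M + D).
  exact: posdefD (posdef_scalar c_gt0) (posdef_psd Dpd).
have [Nsym _] := posdef_psd (posdef_invmx Mpd).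
have c0 : c != 0 by rewrite gt_eqF.
apply: eq_is_min (fun w => esym (quad_add_sqdist c D e f v w)) _.
rewrite woodbury_scalar ?invmx_1_addZ ?posdef_unitmx //.
set N := invmx (c%:M + D).
suff -> : quad (c%:M - c ^+ 2 *: N) ((c *: N) *m e) (f - dotp e (N *m e)) v =
    f + c * sqnorm v - dotp (e + c *: v) (N *m (e + c *: v)).
  exact: quad_posdef_min.
rewrite /quad /sqnorm mulmxBl mul_scalar_mx -!scalemxAl mulmxDr -scalemxAr.
rewrite !dotpBr !dotpDl !dotpDr !dotpZl !dotpZr (dotp_sym_mulmx e N v Nsym).
ring.
Qed.

End InfConvolution.

Section DynamicProgramming.
Context {R : realType} {d : nat}.
Variables (b c : R) (x : nat -> 'cV[R]_d) (y : nat -> R).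

Lemma eq_Q t (u u' : nat -> 'cV[R]_d) : (1 <= t)%N ->
  (forall s, (s <= t)%N -> u s = u' s) -> Q b c x y t u = Q b c x y t u'.
Proof.
move=> t_ge1 uu'; rewrite /Q uu' //; congr (_ + _ * _ + _).
  by apply: eq_big_nat => s /andP[_ st]; rewrite !uu' // ltnW.
by apply: eq_big_nat => s /andP[_ st]; rewrite uu'.
Qed.

Lemma Q1 u :
  Q b c x y 1 u = b * sqnorm (u 1%N) + (y 1%N - dotp (u 1%N) (x 1%N)) ^+ 2.
Proof. by rewrite /Q big_geq // mulr0 addr0 big_nat1. Qed.

Lemma QS t u : (1 <= t)%N ->
  Q b c x y t.+1 u = Q b c x y t u + c * sqnorm (u t.+1 - u t)
    + (y t.+1 - dotp (u t.+1) (x t.+1)) ^+ 2.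
Proof.
move=> t_ge1; rewrite /Q big_nat_recr // (big_nat_recr t.+1) //= mulrDr.
ring.
Qed.

Lemma is_P1 v :
  is_P b c x y 1 v (b * sqnorm v + (y 1%N - dotp v (x 1%N)) ^+ 2).
Proof. by split=> [|u <-]; [exists (fun=> v) |]; rewrite Q1. Qed.

Lemma is_PS t (g : 'cV[R]_d -> R) v m : (1 <= t)%N ->
  (forall w, is_P b c x y t w (g w)) ->
  is_min (fun w => g w + c * sqnorm (v - w)) m ->
  is_P b c x y t.+1 v (m + (y t.+1 - dotp v (x t.+1)) ^+ 2).
Proof.
move=> t_ge1 Pg [[w gw] gmin]; split=> [|u ut].
  have [[u [ut Qu]] _] := Pg w.
  exists (fun s => if s == t.+1 then v else u s); rewrite eqxx; split=> //.
  rewrite QS // eqxx ltn_eqF // ut -gw -Qu; congr (_ + _ + _).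
  by apply: eq_Q => // s st; rewrite ltn_eqF.
rewrite QS // ut lerD2r (le_trans (gmin (u t))) // lerD2r.
exact: (Pg (u t)).2.
Qed.

End DynamicProgramming.

Section Recursion.
Context {R : realType} {d : nat}.
Variables (b c : R) (x : nat -> 'cV[R]_d) (y : nat -> R).
Hypotheses (b_gt0 : 0 < b) (c_gt0 : 0 < c).

Local Notation D := (Dm b c x).
Local Notation e := (em b c x y).
Local Notation f := (fm b c x y).

Lemma DmSS t :
  D t.+2 = invmx (invmx (D t.+1) + c^-1%:M) + x t.+2 *m (x t.+2)^T.
Proof. by []. Qed.

Lemma emSS t :
  e t.+2 = invmx (1%:M + c^-1 *: D t.+1) *m e t.+1 + y t.+2 *: x t.+2.
Proof. by []. Qed.

Lemma fmSS t :
  f t.+2 =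
  f t.+1 - dotp (e t.+1) (invmx (c%:M + D t.+1) *m e t.+1) + y t.+2 ^+ 2.
Proof. by rewrite -quad_formE. Qed.

Lemma posdef_Dm t : (1 <= t)%N -> posdef (D t).
Proof.
elim: t => [//|[_ _|t IH _]].
  exact: posdefD (posdef_scalar b_gt0) (psd_outer _).
rewrite DmSS; apply: posdefD (posdef_invmx _) (psd_outer _).
have cV_gt0 : 0 < c^-1 by rewrite invr_gt0.
exact: posdefD (posdef_invmx (IH isT)) (posdef_psd (posdef_scalar cV_gt0)).
Qed.

Lemma is_P_quad t : (1 <= t)%N ->
  forall v, is_P b c x y t v (quad (D t) (e t) (f t) v).
Proof.
elim: t => [//|[_ _|t IH _] v].
  rewrite -[e 1]add0r -[f 1]add0r quad_add_outer.
  have -> : quad b%:M 0 0 v = b * sqnorm v.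
    by rewrite /quad mul_scalar_mx dotpZr dotp0r mulr0 subr0 addr0.
  exact: is_P1.
rewrite DmSS emSS fmSS quad_add_outer.
apply: is_PS => //; first exact: IH.
by apply: quad_inf_sqdist => //; apply: posdef_Dm.
Qed.

End Recursion.

Theorem lemma2 (R : realType) (d : nat) (b c : R)
  (x : nat -> 'cV[R]_d) (y : nat -> R) :
  0 < b -> 0 < c ->
  forall t : nat, (1 <= t)%N ->
    posdef (Dm b c x t) /\
    forall v : 'cV[R]_d,
      is_P b c x y t v
        (dotp v (Dm b c x t *m v) - 2 * dotp v (em b c x y t) + fm b c x y t).
Proof.
move=> b_gt0 c_gt0 t t_ge1.
split; first exact: posdef_Dm.
exact: is_P_quad.
Qed.
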